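(* Let $k$ be a positive integer. For any graph $H=(W,F)$ there exists a graph $G$ containing $W$ as a subset of its vertex set such that the induced subgraph $G[W]$ is isomorphic to $H$ and $W$ is a minimum $k$-PVC of $G$.
   Context: All graphs are finite and simple. For a graph $G$ and a positive integer $k$, a $k$-path vertex cover ($k$-PVC) of $G$ is a set $S$ of vertices such that every path on $k$ vertices in $G$ contains at least one vertex of $S$. $\psi_k(G)$ denotes the minimum cardinality of a $k$-PVC of $G$, and a minimum $k$-PVC is a $k$-PVC of cardinality $\psi_k(G)$. *)

From mathcomp Require Import all_boot.
Set Implicit Arguments. Unset Strict Implicit. Unset Printing Implicit Defensive.

Definition simple_graph (T : finType) (e : rel T) : Prop :=
  symmetric e /\ irreflexive e.

Definition is_kpath (T : finType) (e : rel T) (k : nat) (p : seq T) : bool :=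
  [&& size p == k, uniq p &
      match p with [::] => true | x :: q => path e x q end].

Definition kPVC (T : finType) (e : rel T) (k : nat) (S : {set T}) : Prop :=
  forall p : seq T, is_kpath e k p -> has (fun v => v \in S) p.

Definition min_kPVC (T : finType) (e : rel T) (k : nat) (S : {set T}) : Prop :=
  kPVC e k S /\ forall S' : {set T}, kPVC e k S' -> #|S| <= #|S'|.

(* Attach to every vertex w of H a pendant path (w,0) - (w,1) - ... - (w,k-1),
   the copy of H being the layer 0.  Each pendant path has k vertices, so
   every k-PVC meets every fibre and has at least |W| vertices.  Conversely a
   path avoiding layer 0 stays inside one fibre minus its base vertex, which
   has only k-1 vertices; so layer 0 is itself a k-PVC. *)
From mathcomp Require Import all_boot.
From mathcomp Require Import zify.

Lemma iota_path_succ m n : path (fun a b => a.+1 == b) m (iota m.+1 n).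
Proof. by elim: n m => //= n IHn m; rewrite eqxx IHn. Qed.

Lemma size_uniq_fibre {A : eqType} {B : finType} {a : A} {P : {pred B}}
    {s : seq (A * B)} :
  uniq s -> all (fun v => (a == v.1) && (v.2 \in P)) s -> size s <= #|P|.
Proof.
move=> uniq_s /allP fibre_s.
have uniq_snd : uniq (map snd s).
  rewrite map_inj_in_uniq // => [[a1 b1] [a2 b2]] /fibre_s /andP[/eqP /= <- _].
  by move=> /fibre_s /andP[/eqP /= <- _] /= ->.
rewrite -(size_map snd) -(card_uniqP uniq_snd); apply/subset_leq_card/subsetP.
by move=> b /mapP[v /fibre_s /andP[_ Pv] ->].
Qed.

Section PendantPaths.

Variables (W : finType) (F : rel W) (n : nat).

Definition pendant_paths : rel (W * 'I_n.+1) := fun u v =>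
  if (u.2 == ord0) && (v.2 == ord0) then F u.1 v.1
  else (u.1 == v.1) && ((u.2.+1 == v.2 :> nat) || (v.2.+1 == u.2 :> nat)).

Definition pendant_path (w : W) : seq (W * 'I_n.+1) :=
  [seq (w, i) | i <- enum 'I_n.+1].

Definition base_layer : {set W * 'I_n.+1} := (fun w => (w, ord0)) @: [set: W].

Lemma pendant_paths_simple : simple_graph F -> simple_graph pendant_paths.
Proof.
move=> [F_sym F_irr]; split.
- move=> [a i] [b j]; rewrite /pendant_paths /=.
  case: ifP => [/andP[/eqP -> /eqP ->]|]; first by rewrite F_sym.
  by rewrite andbC => ->; rewrite eq_sym orbC.
- move=> [a i]; rewrite /pendant_paths /=; case: ifP => _; first exact: F_irr.
  by rewrite eqxx /=; apply/negbTE/norP; split; apply/eqP; lia.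
Qed.

Lemma pendant_paths_base (x y : W) :
  pendant_paths (x, ord0) (y, ord0) = F x y.
Proof. by []. Qed.

Lemma pendant_path_kpath w : is_kpath pendant_paths n.+1 (pendant_path w).
Proof.
apply/and3P; split.
- by rewrite size_map size_enum_ord.
- by rewrite map_inj_uniq ?enum_uniq // => i j [].
have := val_enum_ord n.+1; rewrite /pendant_path.
case: (enum 'I_n.+1) => [//|i s] /= [val_i val_s].
have : path (fun a b => a.+1 == b) 0 (iota 1 n) := iota_path_succ 0 n.
rewrite -val_s -val_i path_map path_map.
apply: sub_path => a b /= /eqP succ_ab.
by rewrite /pendant_paths /= -!val_eqE /= -succ_ab andbF !eqxx.
Qed.

Lemma mem_base_layer v : (v \in base_layer) = (v.2 == ord0).
Proof.
apply/imsetP/eqP => [[w _ -> //]|].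
by case: v => w i /= ->; exists w.
Qed.

Lemma pendant_paths_same_fibre u v :
  u.2 != ord0 -> pendant_paths u v -> u.1 == v.1.
Proof. by rewrite /pendant_paths => /negbTE ->; case/andP. Qed.

Lemma base_layer_kPVC : kPVC pendant_paths n.+1 base_layer.
Proof.
move=> [//|x q] /and3P[/eqP size_p uniq_p path_p].
apply/negPn/negP; rewrite -all_predC => /allP off_base.
have off_base_snd v : v \in x :: q -> v.2 \in predC1 ord0.
  by move=> /off_base /=; rewrite mem_base_layer.
have fibre_q : all (fun v => x.1 == v.1) q.
  have same_fibre_trans : transitive (fun u v : W * 'I_n.+1 => u.1 == v.1).
    by move=> a b c /eqP -> /eqP ->.
  apply: (order_path_min same_fibre_trans).
  apply: (sub_in_path (P := [pred v | v.2 != ord0])) path_p.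
  - by move=> u v u_off _; apply: pendant_paths_same_fibre.
  - by apply/allP => v /off_base_snd.
have fibre_p : all (fun v => (x.1 == v.1) && (v.2 \in predC1 ord0)) (x :: q).
  apply/allP => v v_p; rewrite off_base_snd // andbT.
  by move: v_p; rewrite inE => /orP[/eqP -> //|/(allP fibre_q)].
by have := size_uniq_fibre uniq_p fibre_p; rewrite size_p cardC1 card_ord ltnn.
Qed.

Lemma base_layer_min (S : {set W * 'I_n.+1}) :
  kPVC pendant_paths n.+1 S -> #|base_layer| <= #|S|.
Proof.
move=> S_cover.
rewrite card_imset; last by move=> a b [].
apply: leq_trans (leq_imset_card fst S).
apply/subset_leq_card/subsetP => w _.
have /hasP[v /mapP[i _ ->] v_S] := S_cover _ (pendant_path_kpath w).
by apply/imsetP; exists (w, i).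
Qed.

End PendantPaths.

Theorem mainTheorem4 (k : nat) (Hk : 0 < k) (W : finType) (F : rel W)
  (HF : simple_graph F) :
  exists (V : finType) (E : rel V) (f : W -> V),
    [/\ simple_graph E,
        injective f,
        (forall x y : W, E (f x) (f y) = F x y) &
        min_kPVC E k (f @: [set: W])].
Proof.
case: k Hk => // n _.
exists (W * 'I_n.+1)%type, (@pendant_paths W F n), (fun w => (w, ord0)).
split.
- exact: pendant_paths_simple.
- by move=> a b [].
- exact: pendant_paths_base.
- split; [exact: base_layer_kPVC | exact: base_layer_min].
Qed.
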